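(* Let $X=\{1,\ldots,n\}$, let $\mathcal{P}=\{X_1,\ldots,X_m\}$ be an $m$-partition of $X$, and let $f\in S(X,\mathcal{P})$. If $f$ is an $n$-cycle, then (i) $\chi^{(f)}$ is an $m$-cycle on $\{1,\ldots,m\}$, and (ii) $\mathcal{P}$ is a uniform partition of $X$.
   Context: Maps are written on the right. An $m$-partition is a partition with exactly $m$ blocks; a partition is uniform if all its blocks have the same size. An $r$-cycle on a set $Y$ is a permutation $(a_1,\ldots,a_r)$ of $Y$ with $a_if=a_{i+1}$ for $i<r$, $a_rf=a_1$ and fixing all other elements; an $n$-cycle on $X$ thus cyclically permutes all of $X$ (a $1$-cycle is the identity). $T(X,\mathcal{P})$ is the semigroup of maps $f\colon X\to X$ such that for every $i$ there is $j$ with $X_if\subseteq X_j$, and $S(X,\mathcal{P})$ is its group of units (bijections $f$ with $f,f^{-1}\in T(X,\mathcal{P})$). For $f\in T(X,\mathcal{P})$, $\chi^{(f)}\colon\{1,\ldots,m\}\to\{1,\ldots,m\}$ is defined by $i\chi^{(f)}=j$ whenever $X_if\subseteq X_j$. *)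

From mathcomp Require Import all_boot all_order all_fingroup.
Set Implicit Arguments. Unset Strict Implicit. Unset Printing Implicit Defensive.

(* X = {1..n} is modelled as 'I_n, the block indices {1..m} as 'I_m.
   An m-partition X_1,...,X_m of X is encoded by its block-index map
   p : 'I_n -> 'I_m (X_i = p^-1(i)); the blocks are nonempty, i.e. p is
   surjective (see is_mpartition). *)

Definition block n m (p : 'I_n -> 'I_m) (i : 'I_m) : {set 'I_n} :=
  [set x | p x == i].

Definition is_mpartition n m (p : 'I_n -> 'I_m) : Prop :=
  forall i : 'I_m, block p i != set0.

Definition inT n m (p : 'I_n -> 'I_m) (f : 'I_n -> 'I_n) : Prop :=
  forall i : 'I_m, exists j : 'I_m, f @: block p i \subset block p j.

Definition inS n m (p : 'I_n -> 'I_m) (f : {perm 'I_n}) : Prop :=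
  inT p f /\ inT p (f^-1)%g.

(* chi^(f): i |-> the index j of the block containing X_i f
   (computed via an element of X_i; well defined when f is in T(X,P)). *)
Definition chi n m (p : 'I_n -> 'I_m) (f : 'I_n -> 'I_n) (i : 'I_m) : 'I_m :=
  match [pick x | x \in block p i] with
  | Some x => p (f x)
  | None => i
  end.

Definition full_cycle (T : finType) (g : T -> T) : Prop :=
  exists s : seq T, [/\ uniq s, size s = #|T| & fcycle g s].

Definition uniform n m (p : 'I_n -> 'I_m) : Prop :=
  forall i j : 'I_m, #|block p i| = #|block p j|.

From mathcomp Require Import all_boot all_order all_fingroup.
Set Implicit Arguments. Unset Strict Implicit.

(* Since f maps each block into a block, the block-index map p intertwines f
   with chi^(f): p (x f) = (p x) chi^(f).  Hence the single f-orbit of X is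
   carried onto a single chi^(f)-orbit, which covers all of {1..m} because the
   blocks are nonempty.  As f is injective, |X_i| <= |X_i chi^(f)|, and
   following the cycle chi^(f) around forces all these inequalities to be
   equalities. *)

Section FullCycle.

Variables (T : finType) (g : T -> T).

Lemma full_cycle_fconnect : full_cycle g -> forall x y, fconnect g x y.
Proof.
move=> [s [uniq_s size_s cycle_s]] x y.
have mem_s z : z \in s.
  have /subset_cardP/(_ (subset_predT _)) -> // : #|s| = #|T|.
  by rewrite (card_uniqP uniq_s).
exact: (connect_cycle cycle_s (mem_s x)) (mem_s y).
Qed.

Lemma fconnect_full_cycle : (forall x y, fconnect g x y) -> full_cycle g.
Proof.
move=> conn; case: (pickP (@predT T)) => [x _ | T_empty].
  exists (fingraph.orbit g x); split; first exact: orbit_uniq.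
    by rewrite size_orbit /order; apply: eq_card => y; rewrite -topredE /= conn.
  by apply/(orbitPcycle 2 0); apply: conn.
by exists [::]; split=> //; apply/esym/eq_card0.
Qed.

Lemma fconnect_homo_leq (w : T -> nat) :
  (forall x, w x <= w (g x)) -> forall x y, fconnect g x y -> w x <= w y.
Proof.
move=> w_g x y /iter_findex <-.
by elim: (findex g x y) => [|k IHk] //=; apply: leq_trans IHk (w_g _).
Qed.

End FullCycle.

Lemma fconnect_semiconj (T U : finType) (f : T -> T) (c : U -> U) (h : T -> U) :
  (forall x, h (f x) = c (h x)) ->
  forall x y, fconnect f x y -> fconnect c (h x) (h y).
Proof.
move=> hf x y /iter_findex <-.
have -> : h (iter (findex f x y) f x) = iter (findex f x y) c (h x).
  by elim: (findex f x y) => [|k IHk] //=; rewrite hf IHk.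
exact: fconnect_iter.
Qed.

Section BlockMap.

Variables (n m : nat) (p : 'I_n -> 'I_m) (f : 'I_n -> 'I_n).
Hypothesis fT : inT p f.

Lemma chi_block_index x : p (f x) = chi p f (p x).
Proof.
rewrite /chi; case: pickP => [y | /(_ x)]; last by rewrite inE eqxx.
rewrite inE => /eqP py; have [j /subsetP sub_j] := fT (p x).
have f_block_j z : p z = p x -> p (f z) = j.
  move=> pz; have /sub_j : f z \in f @: block p (p x) by rewrite imset_f ?inE ?pz.
  by rewrite inE => /eqP.
by rewrite !f_block_j.
Qed.

Lemma card_block_chi :
  injective f -> forall i, #|block p i| <= #|block p (chi p f i)|.
Proof.
move=> f_inj i; rewrite -(card_imset _ f_inj); apply: subset_leq_card.
apply/subsetP=> _ /imsetP[x x_i ->]; move: x_i.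
by rewrite !inE chi_block_index => /eqP ->.
Qed.

End BlockMap.

Theorem proposition4p5 (n m : nat) (p : 'I_n -> 'I_m) (f : {perm 'I_n}) :
  is_mpartition p -> inS p f -> full_cycle f ->
  full_cycle (chi p f) /\ uniform p.
Proof.
move=> blocks_nonempty [fT _] /full_cycle_fconnect f_conn.
have chi_conn i j : fconnect (chi p f) i j.
  have /set0Pn[x] := blocks_nonempty i; have /set0Pn[y] := blocks_nonempty j.
  rewrite !inE => /eqP <- /eqP <-.
  exact: fconnect_semiconj (chi_block_index fT) _ _ (f_conn x y).
split; first exact: fconnect_full_cycle.
have card_le := fconnect_homo_leq (card_block_chi fT (@perm_inj _ f)).
by move=> i j; apply/eqP; rewrite eqn_leq !card_le.
Qed.
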